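(* Let $\mathbf{x}=x_1x_2\ldots$ be an infinite word over a finite alphabet. The following statements are equivalent: (i) $\mathbf{x}$ is a Sturmian word; (ii) $r(n,\mathbf{x})\le 2n+1$ for all $n\ge1$, with equality for infinitely many $n$.
   Context: For integers $i\le j$, $x_i^j=x_ix_{i+1}\cdots x_j$. For $n\ge1$, $r(n,\mathbf{x})=\min\{m\ge1:\ x_i^{i+n-1}=x_{m-n+1}^{m}\text{ for some } 1\le i\le m-n\}$. The subword complexity $p(n,\mathbf{x})$ is the number of distinct factors of length $n$ of $\mathbf{x}$; a Sturmian word is an infinite word with $p(n,\mathbf{x})=n+1$ for every $n\ge1$. *)

From mathcomp Require Import all_boot.
From Stdlib Require Import ClassicalEpsilon.
Set Implicit Arguments. Unset Strict Implicit. Unset Printing Implicit Defensive.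

(* An infinite word x = x_1 x_2 ... over a finite alphabet A is represented
   by w : nat -> A with  x_i = w (i - 1)  (0-based storage). *)

(* fac w j n = the length-n factor of w starting at 0-based position j,
   i.e. x_{j+1}^{j+n}. *)
Definition fac (A : Type) (w : nat -> A) (j n : nat) : seq A :=
  mkseq (fun k => w (j + k)) n.

(* rep_cond w n m : m >= 1 and x_i^{i+n-1} = x_{m-n+1}^m for some 1 <= i <= m-n. *)
Definition rep_cond (A : eqType) (w : nat -> A) (n m : nat) : bool :=
  (0 < m) && has (fun i => fac w i.-1 n == fac w (m - n) n) (iota 1 (m - n)).

(* r(n, x) = min { m >= 1 : rep_cond }  (default 0 if the set is empty,
   which never happens over a finite alphabet). *)
Definition r (A : eqType) (w : nat -> A) (n : nat) : nat :=
  match excluded_middle_informative (exists m, rep_cond w n m) with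
  | left H => ex_minn H
  | right _ => 0
  end.

Definition is_factor (A : Type) (w : nat -> A) (t : seq A) : bool :=
  if excluded_middle_informative (exists j, fac w j (size t) = t) then true else false.

Definition p (A : finType) (w : nat -> A) (n : nat) : nat :=
  #|[set t : n.-tuple A | is_factor w t]|.

Definition sturmian (A : finType) (w : nat -> A) : Prop :=
  forall n, 1 <= n -> p w n = n.+1.

From mathcomp Require Import all_boot.
From mathcomp Require Import zify.
From Stdlib Require Import Classical ClassicalEpsilon.
Set Implicit Arguments. Unset Strict Implicit. Unset Printing Implicit Defensive.

(* A recurrence x_{k+1}^{k+m} = x_{j+1}^{j+m} with k < j creates no new factor of
   length n <= m in the m - n + 1 positions after j.  Since r(m) - m is the first
   position at which a length-m factor recurs, r(m) <= 2m + c for all m >= n gives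
   p(n) <= n + c; conversely p(n) <= n + c gives r(n) <= 2n + c by pigeonhole among
   the first n + c + 1 positions.  This yields both bounds r(n) <= 2n + 1 and
   p(n) <= n + 1, and shows (with c = 0) that a Sturmian word cannot have
   r(m) <= 2m for all large m.  Finally, if p(n) <= n then p(k+1) = p(k) for some k,
   so every length-k factor has a unique right extension; the word is then
   eventually periodic and r(n) - n stays bounded, which contradicts r(n) = 2n + 1
   for infinitely many n. *)

Section Factors.

Variables (A : finType) (w : nat -> A).

Lemma fac_eqP a b m :
  fac w a m = fac w b m <-> (forall x, x < m -> w (a + x) = w (b + x)).
Proof.
split=> [E x lt_xm | E].
  by have := congr1 (nth (w 0) ^~ x) E; rewrite /fac !nth_mkseq.
apply: (@eq_from_nth _ (w 0)); rewrite /fac ?size_mkseq // => x lt_xm.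
by rewrite !nth_mkseq // E.
Qed.

Definition factor_tuple n j : n.-tuple A := [tuple w (j + i) | i < n].

Lemma val_factor_tuple n j : val (factor_tuple n j) = fac w j n.
Proof. by rewrite /= /fac /mkseq -val_enum_ord -map_comp. Qed.

Lemma factor_tuple_inj n a b :
  (factor_tuple n a = factor_tuple n b) <-> (fac w a n = fac w b n).
Proof.
by split=> [E | E]; [rewrite -!val_factor_tuple E | apply: val_inj; rewrite !val_factor_tuple].
Qed.

Definition factors n := [set t : n.-tuple A | is_factor w t].

Lemma p_card_factors n : p w n = #|factors n|.
Proof. by []. Qed.

Lemma factorsP n t : t \in factors n <-> exists j, t = factor_tuple n j.
Proof.
rewrite inE /is_factor; case: excluded_middle_informative => [[j Ej] | no_occ].
  split=> // _; exists j; apply: val_inj.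
  by move: Ej; rewrite size_tuple val_factor_tuple => ->.
split=> // -[j Et]; case: no_occ; exists j.
by rewrite Et size_tuple val_factor_tuple.
Qed.

Lemma factor_tuple_factors n j : factor_tuple n j \in factors n.
Proof. by apply/factorsP; exists j. Qed.

Fixpoint factors_before n L : {set n.-tuple A} :=
  if L is L'.+1 then factor_tuple n L' |: factors_before n L' else set0.

Lemma factors_beforeP n L t :
  t \in factors_before n L <-> exists2 j, j < L & t = factor_tuple n j.
Proof.
elim: L => [|L IH] /=; first by rewrite in_set0; split=> // -[].
rewrite in_setU1; split.
  case/orP => [/eqP -> | /IH [j lt_jL ->]]; first by exists L.
  by exists j => //; apply: ltnW.
move=> [j]; rewrite ltnS leq_eqVlt => /orP [/eqP -> -> | lt_jL Et].
  by rewrite eqxx.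
by apply/orP; right; apply/IH; exists j.
Qed.

Lemma factors_before_subset n L L' :
  L <= L' -> factors_before n L \subset factors_before n L'.
Proof.
move=> le_LL'; apply/subsetP => t /factors_beforeP [j lt_jL ->].
by apply/factors_beforeP; exists j => //; apply: leq_trans le_LL'.
Qed.

Lemma factors_before_factors n L : factors_before n L \subset factors n.
Proof. by apply/subsetP => t /factors_beforeP [j _ ->]; apply: factor_tuple_factors. Qed.

Lemma card_factors_beforeD n L d :
  #|factors_before n (L + d)| <= #|factors_before n L| + d.
Proof.
elim: d => [|d IH]; first by rewrite !addn0.
by rewrite addnS /= cardsU1 addnS; case: (_ \notin _); rewrite ?ltnS // leqW.
Qed.

Lemma card_factors_before n L : #|factors_before n L| <= L.
Proof. by have := card_factors_beforeD n 0 L; rewrite cards0. Qed.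

Lemma factors_before_exhaust n : exists L, factors n \subset factors_before n L.
Proof.
suff cover (s : seq (n.-tuple A)) :
    {subset s <= factors n} -> exists L, {subset s <= factors_before n L}.
  have [L sub_L] : exists L, {subset enum (factors n) <= factors_before n L}.
    by apply: cover => t; rewrite mem_enum.
  by exists L; apply/subsetP => t t_fac; apply: sub_L; rewrite mem_enum.
elim: s => [|t s IH] s_fac; first by exists 0.
have [j ->] : exists j, t = factor_tuple n j by apply/factorsP/s_fac/mem_head.
have [L sub_L] : exists L, {subset s <= factors_before n L}.
  by apply: IH => u u_s; apply: s_fac; rewrite inE u_s orbT.
exists (maxn j.+1 L) => u; rewrite inE => /orP [/eqP -> | u_s].
  by apply/factors_beforeP; exists j; rewrite ?leq_max ?ltnSn.
exact: subsetP (factors_before_subset n (leq_maxr _ _)) _ (sub_L _ u_s).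
Qed.

Lemma factors_before_pigeon n L :
  #|factors_before n L| < L -> exists k j, [/\ k < j, j < L & fac w k n = fac w j n].
Proof.
elim: L => [|L IH] //=.
case: (boolP (factor_tuple n L \in factors_before n L)).
  by move=> /factors_beforeP [k lt_kL /esym /factor_tuple_inj E] _; exists k, L.
move=> fresh; rewrite cardsU1 fresh add1n ltnS => /IH [k [j [lt_kj lt_jL E]]].
by exists k, j; split => //; apply: ltnW.
Qed.

Lemma factors_before_recurrence n m k j :
  k < j -> fac w k m = fac w j m -> n <= m ->
  forall i, i <= m - n + 1 -> factors_before n (j + i) = factors_before n j.
Proof.
move=> lt_kj /fac_eqP E le_nm; elim=> [|i IH] le_i; first by rewrite addn0.
have old : factor_tuple n (j + i) \in factors_before n (j + i).
  apply/factors_beforeP; exists (k + i); first by lia.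
  apply/factor_tuple_inj/fac_eqP => x lt_xn; rewrite -!addnA E //; lia.
by rewrite addnS /= (setUidPr _) ?sub1set // IH //; lia.
Qed.

Lemma p_leq_of_recurrences n c :
  (forall m, n <= m -> exists k j, [/\ k < j, j <= m + c & fac w k m = fac w j m]) ->
  p w n <= n + c.
Proof.
move=> recur.
(* Strong induction on [L]: the recurrence of length [L - c - 1] freezes the set
   of factors from [j] to [j + L - c - n], and each of the remaining positions
   below [L] contributes at most one new factor. *)
have bounded L : #|factors_before n L| <= n + c.
  elim/ltn_ind: L => L IH; case: (leqP L (n + c)) => [le_L | gt_L].
    exact: leq_trans (card_factors_before n L) le_L.
  have /recur [k [j [lt_kj le_j E]]] : n <= L - c - 1 by lia.
  have stuck : factors_before n (j + (L - c - n)) = factors_before n j.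
    by apply: (factors_before_recurrence lt_kj E); lia.
  have le_L : L <= j + (L - c - n) + (L - (j + (L - c - n))) by lia.
  have := subset_leq_card (factors_before_subset n le_L).
  have := card_factors_beforeD n (j + (L - c - n)) (L - (j + (L - c - n))).
  have /IH : j < L by lia.
  rewrite stuck; have := card_factors_before n j; lia.
have [L sub_L] := factors_before_exhaust n.
by rewrite p_card_factors (leq_trans (subset_leq_card sub_L)).
Qed.

Lemma rep_condP n M :
  rep_cond w n M <-> n < M /\ exists2 k, k < M - n & fac w k n = fac w (M - n) n.
Proof.
rewrite /rep_cond; split.
  case/andP => M_gt0 /hasP [i]; rewrite mem_iota => /andP [i_gt0 lt_i] /eqP E.
  by split; [lia | exists i.-1; [lia | ]].
move=> [lt_nM [k lt_k E]]; apply/andP; split; first by lia.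
by apply/hasP; exists k.+1; rewrite ?mem_iota /= ?E //; lia.
Qed.

Lemma rep_cond_of_recurrence n k j :
  k < j -> fac w k n = fac w j n -> rep_cond w n (j + n).
Proof. by move=> lt_kj E; apply/rep_condP; rewrite addnK; split; [lia | exists k]. Qed.

Lemma r_spec n : rep_cond w n (r w n) /\ forall M, rep_cond w n M -> r w n <= M.
Proof.
rewrite /r; case: excluded_middle_informative => [ex_rep | no_rep].
  by case: (ex_minnP ex_rep).
have [k [j [lt_kj _ E]]] := @factors_before_pigeon n #|{: n.-tuple A}|.+1 (max_card _).
by case: no_rep; exists (j + n); apply: rep_cond_of_recurrence lt_kj E.
Qed.

Lemma r_recurrence n : exists2 k, k < r w n - n & fac w k n = fac w (r w n - n) n.
Proof. by have [/rep_condP []] := r_spec n. Qed.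

Lemma r_leq_recurrence n k j : k < j -> fac w k n = fac w j n -> r w n <= j + n.
Proof. by move=> lt_kj E; apply: (proj2 (r_spec n)); apply: rep_cond_of_recurrence lt_kj E. Qed.

Lemma r_leq_of_p n c : p w n <= n + c -> r w n <= 2 * n + c.
Proof.
move=> p_le; have few : #|factors_before n (n + c).+1| < (n + c).+1.
  by rewrite ltnS (leq_trans (subset_leq_card (factors_before_factors _ _))).
have [k [j [lt_kj lt_j E]]] := factors_before_pigeon few.
by apply: leq_trans (r_leq_recurrence lt_kj E) _; lia.
Qed.

Lemma p_leq_of_r n c : (forall m, n <= m -> r w m <= 2 * m + c) -> p w n <= n + c.
Proof.
move=> r_le; apply: p_leq_of_recurrences => m le_nm.
have [k lt_k E] := r_recurrence m.
by exists k, (r w m - m); split=> //; have := r_le m le_nm; lia.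
Qed.

Definition prefix_tuple k (t : k.+1.-tuple A) : k.-tuple A :=
  [tuple tnth t (widen_ord (leqnSn k) i) | i < k].

Lemma prefix_factor_tuple k j : prefix_tuple (factor_tuple k.+1 j) = factor_tuple k j.
Proof. by apply: eq_from_tnth => i; rewrite !tnth_mktuple. Qed.

Lemma factors_prefix k : factors k = (@prefix_tuple k) @: factors k.+1.
Proof.
apply/setP => t; apply/idP/imsetP => [/factorsP [j ->] | [_ /factorsP [j ->] ->]].
  by exists (factor_tuple k.+1 j); rewrite ?prefix_factor_tuple ?factor_tuple_factors.
by rewrite prefix_factor_tuple factor_tuple_factors.
Qed.

Lemma p_leqS k : p w k <= p w k.+1.
Proof. by rewrite !p_card_factors {1}factors_prefix leq_imset_card. Qed.

Lemma next_letter_unique k : p w k.+1 <= p w k ->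
  forall a b, fac w a k = fac w b k -> w (a + k) = w (b + k).
Proof.
move=> p_stall a b /factor_tuple_inj E.
have prefix_inj : {in factors k.+1 &, injective (@prefix_tuple k)}.
  apply/imset_injP; rewrite -factors_prefix eqn_leq -!p_card_factors p_stall andbT.
  exact: p_leqS.
have := prefix_inj _ _ (factor_tuple_factors _ a) (factor_tuple_factors _ b).
rewrite !prefix_factor_tuple => /(_ E) /factor_tuple_inj /fac_eqP; exact.
Qed.

Lemma fac_eq_propagates k :
  (forall a b, fac w a k = fac w b k -> w (a + k) = w (b + k)) ->
  forall a b, fac w a k = fac w b k -> forall x, w (a + x) = w (b + x).
Proof.
move=> next a b E.
have shifted y : fac w (a + y) k = fac w (b + y) k.
  elim: y => [|y IH]; first by rewrite !addn0.
  apply/fac_eqP => x lt_xk; rewrite !addnS !addSnnS.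
  case: (ltnP x.+1 k) => [lt_x1k | le_kx1]; first by move/fac_eqP: IH; apply.
  by have -> : x.+1 = k; [lia | apply: next].
move=> x; case: (ltnP x k) => [lt_xk | le_kx].
  by move/fac_eqP: (shifted 0); rewrite !addn0; apply.
by rewrite -(subnK le_kx) !addnA; apply: next.
Qed.

Lemma p_stalls n : p w n <= n -> exists k, p w k.+1 <= p w k.
Proof.
elim: n => [|n IH] p_le.
  move: p_le; rewrite p_card_factors leqn0 => /eqP /card0_eq /(_ (factor_tuple 0 0)).
  by rewrite factor_tuple_factors.
case: (leqP (p w n.+1) (p w n)) => [stall | grow]; first by exists n.
exact/IH/ltnSE/(leq_trans grow).
Qed.

Lemma r_bounded_of_p_stall k : p w k.+1 <= p w k -> exists C, forall n, r w n <= n + C.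
Proof.
move=> p_stall.
have [k0 [j0 [lt_kj _ E]]] := @factors_before_pigeon k #|{: k.-tuple A}|.+1 (max_card _).
have periodic := fac_eq_propagates (next_letter_unique p_stall) E.
exists j0 => n; rewrite addnC; apply: (r_leq_recurrence lt_kj).
by apply/fac_eqP => x _; apply: periodic.
Qed.

End Factors.

Theorem theorem2p4 (A : finType) (w : nat -> A) :
  sturmian w <->
  ((forall n, 1 <= n -> r w n <= 2 * n + 1) /\
   (forall N, exists n, N <= n /\ 1 <= n /\ r w n = 2 * n + 1)).
Proof.
split=> [sturm | [r_le r_max] n n_gt0].
  have r_le n : 1 <= n -> r w n <= 2 * n + 1.
    by move=> n_gt0; apply: r_leq_of_p; rewrite sturm // addn1.
  split=> // N; apply: NNPP => no_max.
  suff : p w N.+1 <= N.+1 + 0 by rewrite sturm // addn0 ltnn.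
  apply: p_leq_of_r => m le_Nm; have := r_le m (leq_trans (ltn0Sn N) le_Nm).
  suff : r w m <> 2 * m + 1 by lia.
  by move=> r_eq; apply: no_max; exists m; split; [lia | split; [lia | ]].
apply/eqP; rewrite eqn_leq -{1}addn1 p_leq_of_r => [|m le_nm]; last first.
  by apply: r_le; apply: leq_trans le_nm.
rewrite ltnNge; apply/negP => /p_stalls [k /r_bounded_of_p_stall [C r_le_C]].
have [m [le_Cm [_ r_eq]]] := r_max C.
by have := r_le_C m; lia.
Qed.
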